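(* Let $\mathbb F$ be an algebraically closed field and $\lambda\in\overline{\mathbb F}$. (1) If $C(s)\in\mathbb F[s]^{p_1\times q_1}$, $D(s)\in\mathbb F[s]^{p_2\times q_2}$ are pencils and $A(s)=\begin{bmatrix}C(s)&0\\0&D(s)\end{bmatrix}$, then $\dim\mathcal L^i_\lambda(A(s))=\dim\mathcal L^i_\lambda(C(s))+\dim\mathcal L^i_\lambda(D(s))$ for all $i\ge0$. (2) If $C(s)\in\mathbb F[s]^{p\times q_1}$ and $A(s)=\begin{bmatrix}C(s)&0\end{bmatrix}\in\mathbb F[s]^{p\times(q_1+q_2)}$, then $\dim\mathcal L^i_\lambda(A(s))=\dim\mathcal L^i_\lambda(C(s))+q_2$ for all $i\ge1$. (3) If $C(s)\in\mathbb F[s]^{p_1\times q}$ and $A(s)=\begin{bmatrix}C(s)\\0\end{bmatrix}\in\mathbb F[s]^{(p_1+p_2)\times q}$, then $\dim\mathcal L^i_\lambda(A(s))=\dim\mathcal L^i_\lambda(C(s))$ for all $i\ge0$.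
   Context: A pencil is $A(s)=A_0+sA_1$ with constant matrices $A_0,A_1$; $A(\infty):=A_1$, $\overline{\mathbb F}=\mathbb F\cup\{\infty\}$. A Jordan chain at $\lambda$ of length $k+1$ is $(x_k,\dots,x_0)$ of column vectors (of size the number of columns), $x_0\ne0$, with $A(\lambda)x_0=0$, $A(\lambda)x_i=-A_1x_{i-1}$ ($1\le i\le k$) if $\lambda\in\mathbb F$, and $A_1x_0=0$, $A_1x_i=-A_0x_{i-1}$ if $\lambda=\infty$. $\mathcal L^\ell_\lambda(A(s))$ ($\ell\ge1$) is the span of the vectors of all Jordan chains at $\lambda$ of length $\le\ell$ (and $\{0\}$ if there are none), $\mathcal L^0_\lambda(A(s))=\{0\}$. *)

From HB Require Import structures.
From mathcomp Require Import all_boot all_order all_algebra.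
From Stdlib Require Import ClassicalEpsilon.
Set Implicit Arguments. Unset Strict Implicit. Unset Printing Implicit Defensive.
Import Order.TTheory GRing.Theory Num.Theory.
Local Open Scope ring_scope.

(* A pencil A(s) = A0 + s A1 is represented by its two coefficient matrices
   A0 A1 : 'M[F]_(m, n).  A point of F-bar = F ∪ {∞} is an [option F]:
   [Some a] is a in F and [None] is ∞. *)

(* x : nat -> 'cV_n, with x i for 0 <= i <= k, is a Jordan chain
   (x_k, ..., x_0) of length k+1 at lam. *)
Definition jordan_chain (F : fieldType) (m n : nat) (A0 A1 : 'M[F]_(m, n))
    (lam : option F) (k : nat) (x : nat -> 'cV[F]_n) : Prop :=
  x 0%N != 0 /\
  match lam with
  | Some a =>
      (A0 + a *: A1) *m x 0%N = 0 /\
      (forall i, (1 <= i <= k)%N -> (A0 + a *: A1) *m x i = - (A1 *m x i.-1))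
  | None =>
      A1 *m x 0%N = 0 /\
      (forall i, (1 <= i <= k)%N -> A1 *m x i = - (A0 *m x i.-1))
  end.

(* v is one of the vectors of some Jordan chain at lam of length <= l
   (length k+1 <= l, i.e. k < l). For l = 0 there are none. *)
Definition chain_vector (F : fieldType) (m n : nat) (A0 A1 : 'M[F]_(m, n))
    (lam : option F) (l : nat) (v : 'cV[F]_n) : Prop :=
  exists k x i, (k < l)%N /\ jordan_chain A0 A1 lam k x /\ (i <= k)%N /\ v = x i.

Definition in_span (F : fieldType) (n : nat) (S : 'cV[F]_n -> Prop)
    (v : 'cV[F]_n) : Prop :=
  exists (k : nat) (vs : 'I_k -> 'cV[F]_n) (c : 'I_k -> F),
    (forall j, S (vs j)) /\ v = \sum_(j < k) c j *: vs j.

Definition represents_L (F : fieldType) (m n : nat) (A0 A1 : 'M[F]_(m, n))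
    (lam : option F) (l : nat) (M : 'M[F]_n) : Prop :=
  forall v : 'cV[F]_n, (v^T <= M)%MS <-> in_span (chain_vector A0 A1 lam l) v.

(* A matrix representing L^l_lam(A) (chosen by classical choice; one exists
   since every subspace of F^n is a row space). *)
Definition L_mx (F : fieldType) (m n : nat) (A0 A1 : 'M[F]_(m, n))
    (lam : option F) (l : nat) : 'M[F]_n :=
  epsilon (inhabits 0) (represents_L A0 A1 lam l).

Definition dimL (F : fieldType) (m n : nat) (A0 A1 : 'M[F]_(m, n))
    (lam : option F) (l : nat) : nat :=
  \rank (L_mx A0 A1 lam l).

From HB Require Import structures.
From mathcomp Require Import all_boot all_order all_algebra.
From mathcomp Require Import boolp.
From Stdlib Require Import ClassicalEpsilon.
From mathcomp Require Import zify.
Set Implicit Arguments. Unset Strict Implicit. Unset Printing Implicit Defensive.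
Import GRing.Theory.
Local Open Scope ring_scope.

(* Dropping leading zero vectors from a solution of the chain equations
   leaves a Jordan chain, so L^l is also spanned by all such solutions.
   Solutions for diag(C, D) split into solutions for C and for D and conversely,
   whence L^l(diag(C, D)) = L^l(C) (+) L^l(D).  Zero rows do not change the
   chain equations, and for a zero pencil every nonzero vector is a Jordan
   chain of length one.  Finally [C 0] is diag(C, E) for the empty 0 x q2
   pencil E, up to an empty block of zero rows. *)

Section Span.
Variable F : fieldType.

Lemma mem_in_span n (S : 'cV[F]_n -> Prop) v : S v -> in_span S v.
Proof.
by exists 1%N, (fun=> v), (fun=> 1); split=> //; rewrite big_ord1 scale1r.
Qed.

Lemma in_span0 n (S : 'cV[F]_n -> Prop) : in_span S 0.
Proof. by exists 0%N, (fun=> 0), (fun=> 0); split=> [[]|]; rewrite ?big_ord0. Qed.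

Lemma in_spanD n (S : 'cV[F]_n -> Prop) v w :
  in_span S v -> in_span S w -> in_span S (v + w).
Proof.
move=> [k1 [vs1 [c1 [S1 ->]]]] [k2 [vs2 [c2 [S2 ->]]]].
pose glue T (f1 : 'I_k1 -> T) (f2 : 'I_k2 -> T) j :=
  match split j with inl a => f1 a | inr b => f2 b end.
exists (k1 + k2)%N, (glue _ vs1 vs2), (glue _ c1 c2); split.
  by move=> j; rewrite /glue; case: (split j).
by rewrite big_split_ord /glue; congr (_ + _); apply: eq_bigr => j _;
  rewrite ?(unsplitK (inl _ j)) ?(unsplitK (inr _ j)).
Qed.

Lemma in_spanZ n (S : 'cV[F]_n -> Prop) a v : in_span S v -> in_span S (a *: v).
Proof.
move=> [k [vs [c [Svs ->]]]]; exists k, vs, (fun j => a * c j); split=> //.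
by rewrite scaler_sumr; apply: eq_bigr => j _; rewrite scalerA.
Qed.

Lemma in_span_mul m n (S' : 'cV[F]_m -> Prop) (T : 'M[F]_(m, n))
    (S : 'cV[F]_n -> Prop) v :
  (forall u, S u -> in_span S' (T *m u)) -> in_span S v -> in_span S' (T *m v).
Proof.
move=> TS [k [vs [c [Svs ->]]]]; rewrite mulmx_sumr.
elim/big_ind: _ => [|u w|j _]; [exact: in_span0 | exact: in_spanD |].
by rewrite -scalemxAr; apply/in_spanZ/TS.
Qed.

Definition spanned_by n (S : 'cV[F]_n -> Prop) (M : 'M[F]_n) :=
  forall u, (u^T <= M)%MS -> in_span S u.

Lemma spanned_by_adds n (S : 'cV[F]_n -> Prop) M v :
  spanned_by S M -> in_span S v -> spanned_by S (M + v^T)%MS.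
Proof.
move=> SM Sv u /sub_addsmxP [[a b] /= uE].
have -> : u = (a *m M)^T + (b *m v^T)^T by rewrite -linearD /= -uE trmxK.
apply: in_spanD; first by apply: SM; rewrite trmxK submxMl.
by rewrite trmx_mul trmxK [b^T]mx11_scalar mul_mx_scalar; apply: in_spanZ.
Qed.

(* A rank-maximal matrix whose row space lies in the span already contains it. *)
Lemma in_span_row_space n (S : 'cV[F]_n -> Prop) :
  exists M : 'M[F]_n, forall v, (v^T <= M)%MS <-> in_span S v.
Proof.
pose reached (r : nat) := `[< exists M, spanned_by S M /\ \rank M = r >].
have reached0 : exists r, reached r.
  exists 0%N; apply/asboolP; exists 0; split; last exact: mxrank0.
  by move=> u; rewrite submx0 trmx_eq0 => /eqP ->; apply: in_span0.
have reached_le r : reached r -> (r <= n)%N.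
  by move=> /asboolP [M [_ <-]]; apply: rank_leq_col.
case: (ex_maxnP reached0 reached_le) => _ /asboolP [M [SM <-]] maxM.
exists M => v; split=> [/SM // | Sv].
have : (\rank (M + v^T)%MS <= \rank M)%N.
  by apply: maxM; apply/asboolP; exists (M + v^T)%MS; split=> //; apply: spanned_by_adds.
by rewrite (geq_leqif (mxrank_leqif_sup (addsmxSl M v^T))) addsmx_sub => /andP [].
Qed.

End Span.

Section Chains.
Variables (F : fieldType) (m n : nat) (P Q : 'M[F]_(m, n)).

Definition chain_rel (k : nat) (x : nat -> 'cV[F]_n) :=
  P *m x 0%N = 0 /\ forall i, (1 <= i <= k)%N -> P *m x i = - (Q *m x i.-1).

Definition chain_vec (l : nat) (v : 'cV[F]_n) :=
  exists k x i, (k < l)%N /\ (x 0%N != 0 /\ chain_rel k x) /\ (i <= k)%N /\ v = x i.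

Lemma chain_rel_drop k x j :
  chain_rel k x -> (j <= k)%N -> (forall t, (t < j)%N -> x t = 0) ->
  chain_rel (k - j) (fun t => x (t + j)%N).
Proof.
move=> [x0 xS] jk xj0; split.
  case: j jk xj0 => [|j] jk xj0 //=.
  by rewrite xS ?xj0 ?mulmx0 ?oppr0 //; lia.
move=> t /andP [t1 tk]; rewrite xS; last by lia.
by case: t t1 tk => [|t] //= _ _; rewrite addSn.
Qed.

Definition chain_span (l : nat) := in_span (chain_vec l).

Lemma chain_rel_span k x l i :
  chain_rel k x -> (k < l)%N -> (i <= k)%N -> chain_span l (x i).
Proof.
move=> xk kl ik; have [-> | xi_neq0] := eqVneq (x i) 0; first exact: in_span0.
have ex_nz : exists j, (x j != 0) && (j <= i)%N by exists i; rewrite xi_neq0 leqnn.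
case: (ex_minnP ex_nz) => j /andP [xj_neq0 ji] j_min.
have xj0 t : (t < j)%N -> x t = 0.
  move=> tj; apply/eqP; apply: contraTT (tj) => xt_neq0.
  by rewrite -leqNgt; apply: j_min; rewrite xt_neq0 /=; lia.
apply: mem_in_span; exists (k - j)%N, (fun t => x (t + j)%N), (i - j)%N.
split; first by lia.
split; first by split; [| apply: chain_rel_drop => //; lia].
by split; [lia | rewrite subnK].
Qed.

End Chains.

Lemma chain_rel_mul (F : fieldType) (m n m' n' : nat) (P Q : 'M[F]_(m, n))
    (P' Q' : 'M[F]_(m', n')) (T : 'M[F]_(n', n)) (S : 'M[F]_(m', m)) k x :
  P' *m T = S *m P -> Q' *m T = S *m Q ->
  chain_rel P Q k x -> chain_rel P' Q' k (fun t => T *m x t).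
Proof.
move=> PT QT [x0 xS]; split; first by rewrite mulmxA PT -mulmxA x0 mulmx0.
by move=> i ik; rewrite mulmxA PT -mulmxA xS // mulmxN !mulmxA QT.
Qed.

Lemma chain_span_mul (F : fieldType) (m n m' n' : nat) (P Q : 'M[F]_(m, n))
    (P' Q' : 'M[F]_(m', n')) (T : 'M[F]_(n', n)) (S : 'M[F]_(m', m)) l v :
  P' *m T = S *m P -> Q' *m T = S *m Q ->
  chain_span P Q l v -> chain_span P' Q' l (T *m v).
Proof.
move=> PT QT; apply: in_span_mul => _ [k [x [i [kl [[_ xk] [ik ->]]]]]].
exact: chain_rel_span (chain_rel_mul PT QT xk) kl ik.
Qed.

Lemma chain_span_block (F : fieldType) (m1 n1 m2 n2 : nat) (P Q : 'M[F]_(m1, n1))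
    (P' Q' : 'M[F]_(m2, n2)) l v :
  chain_span (block_mx P 0 0 P') (block_mx Q 0 0 Q') l v <->
  chain_span P Q l (usubmx v) /\ chain_span P' Q' l (dsubmx v).
Proof.
split=> [Av | [Cv Dv]].
  have uE : usubmx v = row_mx 1%:M (0 : 'M_(n1, n2)) *m v.
    by rewrite -[v in RHS]vsubmxK mul_row_col mul1mx mul0mx addr0.
  have dE : dsubmx v = row_mx (0 : 'M_(n2, n1)) 1%:M *m v.
    by rewrite -[v in RHS]vsubmxK mul_row_col mul1mx mul0mx add0r.
  rewrite uE dE; split;
    [ apply: (chain_span_mul (S := row_mx 1%:M (0 : 'M_(m1, m2)))) Av
    | apply: (chain_span_mul (S := row_mx (0 : 'M_(m2, m1)) 1%:M)) Av ];
    by rewrite mul_row_block mul_mx_row !(mulmx1, mul1mx, mulmx0, mul0mx, addr0, add0r).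
have vE : v = col_mx 1%:M 0 *m usubmx v + col_mx 0 1%:M *m dsubmx v.
  by rewrite !mul_col_mx !mul1mx !mul0mx add_col_mx addr0 add0r vsubmxK.
rewrite vE; apply: in_spanD;
  [ apply: (chain_span_mul (S := col_mx 1%:M (0 : 'M_(m2, m1)))) Cv
  | apply: (chain_span_mul (S := col_mx (0 : 'M_(m1, m2)) 1%:M)) Dv ];
  by rewrite mul_block_col mul_col_mx !(mulmx1, mul1mx, mulmx0, mul0mx, addr0, add0r).
Qed.

Lemma chain_span_col_mx0 (F : fieldType) (m1 m2 n : nat) (P Q : 'M[F]_(m1, n)) l v :
  chain_span (col_mx P (0 : 'M_(m2, n))) (col_mx Q 0) l v <-> chain_span P Q l v.
Proof.
split=> vP; rewrite -[v]mul1mx;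
  [ apply: (chain_span_mul (S := row_mx 1%:M (0 : 'M_(m1, m2)))) vP
  | apply: (chain_span_mul (S := col_mx 1%:M (0 : 'M_(m2, m1)))) vP ];
  by rewrite ?mul_row_col ?mul_col_mx !(mulmx1, mul1mx, mul0mx, addr0).
Qed.

Lemma chain_span_zero (F : fieldType) (m n l : nat) (v : 'cV[F]_n) :
  (0 < l)%N -> chain_span (0 : 'M_(m, n)) 0 l v.
Proof.
move=> l_gt0; apply: (@chain_rel_span _ _ _ _ _ 0 (fun=> v) l 0) => //.
by split=> [|i /andP [i1 i0]]; [exact: mul0mx | lia].
Qed.

Section Pencils.
Variables (F : fieldType) (m n : nat).

(* Jordan chains at lam solve the chain equations for the pair (A(lam), A1)
   when lam is finite and (A1, A0) when lam is infinite. *)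
Definition pencil_at (A0 A1 : 'M[F]_(m, n)) (lam : option F) :=
  if lam is Some a then A0 + a *: A1 else A1.

Definition pencil_step (A0 A1 : 'M[F]_(m, n)) (lam : option F) :=
  if lam is Some _ then A1 else A0.

Lemma chain_vectorE (A0 A1 : 'M[F]_(m, n)) lam l :
  chain_vector A0 A1 lam l = chain_vec (pencil_at A0 A1 lam) (pencil_step A0 A1 lam) l.
Proof. by case: lam. Qed.

Lemma L_mxP (A0 A1 : 'M[F]_(m, n)) lam l v :
  (v^T <= L_mx A0 A1 lam l)%MS <->
  chain_span (pencil_at A0 A1 lam) (pencil_step A0 A1 lam) l v.
Proof.
rewrite /chain_span -chain_vectorE; move: v.
exact: epsilon_spec (in_span_row_space (chain_vector A0 A1 lam l)).
Qed.

Lemma dimLE (A0 A1 : 'M[F]_(m, n)) lam l r (N : 'M[F]_(r, n)) :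
  (forall v, (v^T <= N)%MS <->
     chain_span (pencil_at A0 A1 lam) (pencil_step A0 A1 lam) l v) ->
  dimL A0 A1 lam l = \rank N.
Proof.
move=> NP; apply/eqmx_rank/andP; split; apply/row_subP => i; rewrite -[row i _]trmxK.
  by apply/NP/L_mxP; rewrite trmxK row_sub.
by apply/L_mxP/NP; rewrite trmxK row_sub.
Qed.

Lemma pencil_at0 lam : pencil_at (0 : 'M[F]_(m, n)) 0 lam = 0.
Proof. by case: lam => [a|] //=; rewrite scaler0 addr0. Qed.

Lemma pencil_step0 lam : pencil_step (0 : 'M[F]_(m, n)) 0 lam = 0.
Proof. by case: lam. Qed.

End Pencils.

Lemma pencil_at_block (F : fieldType) (m1 m2 n1 n2 : nat) (A0 A1 : 'M[F]_(m1, n1))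
    (B0 B1 : 'M[F]_(m1, n2)) (C0 C1 : 'M[F]_(m2, n1)) (D0 D1 : 'M[F]_(m2, n2)) lam :
  pencil_at (block_mx A0 B0 C0 D0) (block_mx A1 B1 C1 D1) lam =
  block_mx (pencil_at A0 A1 lam) (pencil_at B0 B1 lam)
           (pencil_at C0 C1 lam) (pencil_at D0 D1 lam).
Proof. by case: lam => [a|] //=; rewrite scale_block_mx add_block_mx. Qed.

Lemma pencil_step_block (F : fieldType) (m1 m2 n1 n2 : nat) (A0 A1 : 'M[F]_(m1, n1))
    (B0 B1 : 'M[F]_(m1, n2)) (C0 C1 : 'M[F]_(m2, n1)) (D0 D1 : 'M[F]_(m2, n2)) lam :
  pencil_step (block_mx A0 B0 C0 D0) (block_mx A1 B1 C1 D1) lam =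
  block_mx (pencil_step A0 A1 lam) (pencil_step B0 B1 lam)
           (pencil_step C0 C1 lam) (pencil_step D0 D1 lam).
Proof. by case: lam. Qed.

Lemma pencil_at_col (F : fieldType) (m1 m2 n : nat) (A0 A1 : 'M[F]_(m1, n))
    (B0 B1 : 'M[F]_(m2, n)) lam :
  pencil_at (col_mx A0 B0) (col_mx A1 B1) lam =
  col_mx (pencil_at A0 A1 lam) (pencil_at B0 B1 lam).
Proof. by case: lam => [a|] //=; rewrite scale_col_mx add_col_mx. Qed.

Lemma pencil_step_col (F : fieldType) (m1 m2 n : nat) (A0 A1 : 'M[F]_(m1, n))
    (B0 B1 : 'M[F]_(m2, n)) lam :
  pencil_step (col_mx A0 B0) (col_mx A1 B1) lam =
  col_mx (pencil_step A0 A1 lam) (pencil_step B0 B1 lam).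
Proof. by case: lam. Qed.

Lemma submx_block_diag (F : fieldType) (k r1 r2 n1 n2 : nat) (A : 'M[F]_(k, n1 + n2))
    (M1 : 'M[F]_(r1, n1)) (M2 : 'M[F]_(r2, n2)) :
  (A <= block_mx M1 0 0 M2)%MS = (lsubmx A <= M1)%MS && (rsubmx A <= M2)%MS.
Proof.
apply/idP/andP => [/submxP [w ->] | [/submxP [w1 A1] /submxP [w2 A2]]].
  by rewrite -[w]hsubmxK mul_row_block !mulmx0 addr0 add0r row_mxKl row_mxKr !submxMl.
rewrite -[A]hsubmxK A1 A2.
have -> : row_mx (w1 *m M1) (w2 *m M2) = row_mx w1 w2 *m block_mx M1 0 0 M2.
  by rewrite mul_row_block !mulmx0 addr0 add0r.
exact: submxMl.
Qed.

Lemma dimL_block_diag (F : fieldType) (p1 q1 p2 q2 : nat) (C0 C1 : 'M[F]_(p1, q1))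
    (D0 D1 : 'M[F]_(p2, q2)) lam l :
  dimL (block_mx C0 0 0 D0) (block_mx C1 0 0 D1) lam l =
  (dimL C0 C1 lam l + dimL D0 D1 lam l)%N.
Proof.
rewrite -rank_diag_block_mx; apply: dimLE => v.
rewrite pencil_at_block pencil_step_block !pencil_at0 !pencil_step0 chain_span_block.
rewrite submx_block_diag -trmx_usub -trmx_dsub.
by split=> [/andP [/L_mxP Cv /L_mxP Dv] | [/L_mxP -> /L_mxP ->]].
Qed.

Lemma dimL_col_mx0 (F : fieldType) (p1 p2 q : nat) (C0 C1 : 'M[F]_(p1, q)) lam l :
  dimL (col_mx C0 (0 : 'M_(p2, q))) (col_mx C1 0) lam l = dimL C0 C1 lam l.
Proof.
apply: dimLE => v; rewrite pencil_at_col pencil_step_col pencil_at0 pencil_step0.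
rewrite chain_span_col_mx0; exact: L_mxP.
Qed.

Lemma dimL_zero (F : fieldType) (p q l : nat) (lam : option F) :
  (0 < l)%N -> dimL (0 : 'M[F]_(p, q)) 0 lam l = q.
Proof.
move=> l_gt0; rewrite -[RHS](mxrank1 F q); apply: dimLE => v.
by rewrite pencil_at0 pencil_step0 submx1; split=> // _; apply: chain_span_zero.
Qed.

Theorem proposition3p6 (F : closedFieldType) (lam : option F) :
  (* (1) block diagonal *)
  (forall (p1 q1 p2 q2 : nat) (C0 C1 : 'M[F]_(p1, q1)) (D0 D1 : 'M[F]_(p2, q2))
          (i : nat),
      dimL (block_mx C0 0 0 D0) (block_mx C1 0 0 D1) lam i
      = (dimL C0 C1 lam i + dimL D0 D1 lam i)%N) /\
  (* (2) [C 0] *)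
  (forall (p q1 q2 : nat) (C0 C1 : 'M[F]_(p, q1)) (i : nat),
      (1 <= i)%N ->
      dimL (row_mx C0 (0 : 'M[F]_(p, q2))) (row_mx C1 (0 : 'M[F]_(p, q2))) lam i
      = (dimL C0 C1 lam i + q2)%N) /\
  (* (3) [C; 0] *)
  (forall (p1 p2 q : nat) (C0 C1 : 'M[F]_(p1, q)) (i : nat),
      dimL (col_mx C0 (0 : 'M[F]_(p2, q))) (col_mx C1 (0 : 'M[F]_(p2, q))) lam i
      = dimL C0 C1 lam i).
Proof.
split=> [p1 q1 p2 q2 C0 C1 D0 D1 i|]; first exact: dimL_block_diag.
split=> [|p1 p2 q C0 C1 i]; last exact: dimL_col_mx0.
move=> p q1 q2 C0 C1 i i_gt0.
have blockE (C : 'M[F]_(p, q1)) : block_mx C 0 0 (0 : 'M_(0, q2)) = col_mx (row_mx C 0) 0.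
  by rewrite /block_mx row_mx0.
by rewrite -(dimL_col_mx0 0) -!blockE dimL_block_diag dimL_zero.
Qed.
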